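(* Let $\mathcal{M}$ be the set of compactly supported probability distributions on $\mathbb{R}$ (identified with their cdfs). A mapping $T:\mathcal{M}\to\mathcal{M}$ satisfies $T\circ T_d=T_d\circ T$ for every distortion function $d$ if and only if $T=T^u$ for some utility function $u$.
   Context: Increasing means non-decreasing. A distortion function is an increasing function $d:[0,1]\to[0,1]$ with $d(0)=0$ and $d(1)=1$ (not necessarily continuous). A utility function is an increasing continuous function $u:\mathbb{R}\to\mathbb{R}$. For a distortion function $d$, the probability distortion $T_d:\mathcal{M}\to\mathcal{M}$ is defined by $T_d(F)(x)=\lim_{y\downarrow x} d(F(y))$ for $x\in\mathbb{R}$. For a utility function $u$, the utility transform $T^u:\mathcal{M}\to\mathcal{M}$ maps the distribution of a random variable $X$ to the distribution of $u(X)$, i.e. $T^u(F)=F\circ u^{-1}$ with $F$ viewed as a measure. *)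

From HB Require Import structures.
From mathcomp Require Import all_boot all_order all_algebra.
From mathcomp Require Import all_classical all_reals all_analysis.
Set Implicit Arguments. Unset Strict Implicit. Unset Printing Implicit Defensive.
Import Order.TTheory GRing.Theory Num.Theory.
Import numFieldNormedType.Exports.
Local Open Scope classical_set_scope.
Local Open Scope ring_scope.

Definition inM (R : realType) (F : R -> R) : Prop :=
  {homo F : x y / x <= y} /\
  (forall x, F y @[y --> x^'+] --> F x) /\
  exists a b : R, (forall x, x < a -> F x = 0) /\ (forall x, b <= x -> F x = 1).

(* Distortion function d : [0,1] -> [0,1], nondecreasing, d 0 = 0, d 1 = 1
   (not necessarily continuous).  Represented as R -> R; values outside
   [0,1] are irrelevant. *)
Definition distortion (R : realType) (d : R -> R) : Prop :=
  (forall x, 0 <= x <= 1 -> 0 <= d x <= 1) /\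
  (forall x y, 0 <= x -> x <= y -> y <= 1 -> d x <= d y) /\
  d 0 = 0 /\ d 1 = 1.

Definition utility (R : realType) (u : R -> R) : Prop :=
  {homo u : x y / x <= y} /\ continuous u.

Definition Td (R : realType) (d : R -> R) (F : R -> R) : R -> R :=
  fun x => lim ((fun y => d (F y)) @ x^'+).

(* Measure assigned by the distribution with cdf F to a down-closed set
   D of R: it is sup_{t in D} F(t) (= F(s) if D = (-oo,s], = F(s-) if
   D = (-oo,s), = 1 if D = R, = 0 if D is empty, since sup set0 = 0). *)
Definition down_measure (R : realType) (F : R -> R) (D : set R) : R :=
  sup (F @` D).

(* Utility transform: T^u(F) = F o u^{-1}, the cdf of u(X) for X ~ F:
   T^u(F)(x) = P(u(X) <= x) = mu_F(u^{-1}((-oo, x])).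
   u^{-1}((-oo,x]) is down-closed since u is nondecreasing. *)
Definition Tu (R : realType) (u : R -> R) (F : R -> R) : R -> R :=
  fun x => down_measure F [set t | u t <= x].

(* For a cdf G and an up-set P of [0, 1] containing 1 but not 0, the distortion
   1_P maps G to the Dirac cdf at the quantile inf {t | P (G t)}, while every
   distortion fixes Dirac cdfs.  Hence a transform T commuting with all T_d sends
   the Dirac cdf at x to the Dirac cdf at some u(x), and commutes with all left
   and right quantiles: (T F)^-1(p) = u (F^-1(p)).  Testing this on uniform
   distributions shows that u is nondecreasing and continuous; as a cdf is
   determined by its quantiles, T = T^u.  Conversely, the sublevel sets {u <= x}
   of a utility u are empty, all of R, or a closed half-line (-oo, s], so that
   T^u(G)(x) is 0, 1 or G(s), and in each case commuting with T_d amounts to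
   comparing right limits of d o F and d o T^u(F). *)

From HB Require Import structures.
From mathcomp Require Import all_boot all_order all_algebra.
From mathcomp Require Import all_classical all_reals all_analysis.
From mathcomp Require Import lra.
Import Order.TTheory GRing.Theory Num.Theory.
Import numFieldNormedType.Exports Num.Def.
Local Open Scope classical_set_scope.
Local Open Scope ring_scope.
Set Implicit Arguments. Unset Strict Implicit.

Section RealFacts.
Variable R : realType.

Lemma inf_image_min (T : Type) (f : T -> R) (A : set T) c :
  (forall y, A y -> c <= f y) -> (exists2 y, A y & f y = c) -> inf (f @` A) = c.
Proof.
move=> fc [y Ay fy]; have lb : has_lbound (f @` A) by exists c => _ [z /fc ? <-].
apply/le_anti; rewrite (ge_inf lb) ?lb_le_inf //; first by exists (f y), y.
- by move=> _ [z /fc ? <-].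
- by exists y.
Qed.

Lemma inf_image_le (f g : R -> R) (A B : set R) :
  has_lbound (f @` A) -> B !=set0 ->
  (forall b, B b -> exists2 a, A a & f a <= g b) -> inf (f @` A) <= inf (g @` B).
Proof.
move=> lb [b0 Bb0] fg; apply: lb_le_inf; first by exists (g b0), b0.
move=> _ [b /fg [a Aa fab] <-]; apply: le_trans fab.
by apply: (ge_inf lb); exists a.
Qed.

Lemma inf_upclosed_le (A : set R) x : A !=set0 -> has_lbound A ->
  (forall s t, A s -> s <= t -> A t) -> (inf A <= x <-> forall y, x < y -> A y).
Proof.
move=> A0 lA up; split=> [Ax y xy|Ax].
  have /(inf_lt A0) [z Az zy] : inf A < y by apply: le_lt_trans xy.
  exact: up Az (ltW zy).
rewrite leNgt; apply/negP => xA.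
have := ge_inf lA (Ax ((x + inf A) / 2) _); lra.
Qed.

Lemma nondecreasing_cvg_at_right (g : R -> R) x : {homo g : s t / s <= t} ->
  has_lbound (g @` [set y | x < y]) -> g y @[y --> x^'+] --> inf (g @` [set y | x < y]).
Proof.
move=> g_homo lb; rewrite -set_itvoy.
by apply: nondecreasing_at_right_cvgr; rewrite ?set_itvoy // => s t _ _; exact: g_homo.
Qed.

Section RightInf.
Variable g : R -> R.
Hypothesis g_lb : forall x, has_lbound (g @` [set y | x < y]).

Lemma inf_right_homo : {homo (fun x => inf (g @` [set y | x < y])) : s t / s <= t}.
Proof.
move=> s t st; apply: inf_image_le => //; first by exists (t + 1) => /=; lra.
by move=> y /= ty; exists y => //=; lra.
Qed.

Lemma inf_right_cvg_at_right x : {homo g : s t / s <= t} ->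
  inf (g @` [set z | y < z]) @[y --> x^'+] --> inf (g @` [set y | x < y]).
Proof.
move=> g_homo; set H := fun y => inf (g @` [set z | y < z]).
have H_lb : has_lbound (H @` [set y | x < y]).
  by exists (H x) => _ [y /= /ltW xy <-]; apply: inf_right_homo.
suff <- : inf (H @` [set y | x < y]) = inf (g @` [set y | x < y]).
  by apply: nondecreasing_cvg_at_right => //; exact: inf_right_homo.
apply/le_anti/andP; split.
  apply: inf_image_le => //; first by exists (x + 1) => /=; lra.
  move=> y /= xy; exists ((x + y) / 2) => /=; first lra.
  by apply: (ge_inf (g_lb _)); exists y => //=; lra.
apply: lb_le_inf; first by exists (H (x + 1)), (x + 1) => //=; lra.
by move=> _ [y /= /ltW xy <-]; apply: inf_right_homo.
Qed.

End RightInf.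

Lemma nondecreasing_continuous (f : R -> R) : {homo f : s t / s <= t} ->
  (forall x (e : R), 0 < e -> exists2 y, x < y & f y <= f x + e) ->
  (forall x (e : R), 0 < e -> exists2 y, y < x & f x - e <= f y) -> continuous f.
Proof.
move=> f_homo right left x; apply/cvgrPdist_lt => e e0.
have e2 : 0 < e / 2 by lra.
have [x1 xx1 fx1] := right x _ e2.
have [x2 x2x fx2] := left x _ e2.
apply/nbhs_ballP; exists (minr (x1 - x) (x - x2)).
  by rewrite /= lt_min; apply/andP; split; lra.
move=> t; rewrite /ball /= lt_min => /andP[t1 t2].
have /andP[t3 _] : x - (x - x2) < t < x + (x - x2) by rewrite -ltr_distl distrC.
have /andP[_ t4] : x - (x1 - x) < t < x + (x1 - x) by rewrite -ltr_distl distrC.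
have : f t <= f x1 by apply: f_homo; lra.
have : f x2 <= f t by apply: f_homo; lra.
rewrite ltr_distl; lra.
Qed.

Lemma continuous_right_lt (f : R -> R) s z : {for s, continuous f} -> f s < z ->
  exists2 y, s < y & f y < z.
Proof.
move=> fc fz; near (s^'+) => y; exists y; near: y; first exact: nbhs_right_gt.
exact: cvgr_lt (cvg_at_right_filter fc) _ fz.
Unshelve. all: by end_near.
Qed.

End RealFacts.

Section Cdf.
Variable R : realType.
Implicit Types (F u : R -> R) (D E : set R) (x y q : R).

Lemma inM_homo F : inM F -> {homo F : s t / s <= t}.
Proof. by case. Qed.

Lemma inM_in01 F x : inM F -> 0 <= F x <= 1.
Proof.
case=> F_homo [_ [a [b [Fa Fb]]]]; apply/andP; split.
  rewrite -(Fa (minr x (a - 1))); last by rewrite gt_min; lra.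
  by apply: F_homo; rewrite ge_min lexx.
rewrite -(Fb (maxr x b)); last by rewrite le_max lexx orbT.
by apply: F_homo; rewrite le_max lexx.
Qed.

Definition dirac_cdf q t : R := (q <= t)%R%:R.

Lemma dirac_cdf_homo q : {homo dirac_cdf q : s t / s <= t}.
Proof.
move=> s t st; rewrite /dirac_cdf ler_nat.
by case: (boolP (q <= s)) => // /le_trans /(_ st) ->.
Qed.

Lemma inM_dirac_cdf q : inM (dirac_cdf q).
Proof.
split; first exact: dirac_cdf_homo.
split; last by exists q, q; split=> t; rewrite /dirac_cdf; [move/lt_geF -> | move=> ->].
move=> x; apply: cvg_near_cst; rewrite /dirac_cdf.
have [qx|xq] := lerP q x.
  near=> y; suff -> : q <= y by [].
  by apply: le_trans qx (ltW _); near: y; apply: nbhs_right_gt.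
near=> y; suff -> : (q <= y) = false by [].
by apply: lt_geF; near: y; apply: nbhs_right_lt.
Unshelve. all: by end_near.
Qed.

Lemma dirac_cdf_inj : injective (@dirac_cdf).
Proof.
move=> a b eab; apply/le_anti/andP; split.
  have := congr1 (fun f => f b) eab; rewrite /dirac_cdf lexx.
  by case: (a <= b) => // /eqP; rewrite eqr_nat.
have := congr1 (fun f => f a) eab; rewrite /dirac_cdf lexx.
by case: (b <= a) => // /eqP; rewrite eqr_nat.
Qed.

Definition unif_cdf a h y : R := minr 1 (maxr 0 ((y - a) / h)).

Section UnifCdf.
Variables (a h : R).
Hypothesis h_gt0 : 0 < h.

Lemma inM_unif_cdf : inM (unif_cdf a h).
Proof.
have cont : continuous (unif_cdf a h).
  move=> x; have lin : {for x, continuous (fun y : R => (y - a) / h)}.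
    by apply: cvgM; [apply: cvgB; [exact: cvg_id | exact: cvg_cst] | exact: cvg_cst].
  exact: continuous_min (cvg_cst _) (continuous_max (cvg_cst _) lin).
split.
  move=> s t st; apply: le_min2 => //; apply: le_max2 => //.
  by rewrite ler_pM2r ?invr_gt0 // lerD2r.
split; first by move=> x; apply: cvg_at_right_filter; apply: cont.
exists a, (a + h); split=> t ht; rewrite /unif_cdf.
  have hn : (t - a) / h < 0 by rewrite pmulr_llt0 ?invr_gt0 // subr_lt0.
  by rewrite (max_idPl (ltW hn)); apply/min_idPr; rewrite ler01.
have hp : 1 <= (t - a) / h by rewrite ler_pdivlMr // mul1r; lra.
by rewrite (max_idPr (le_trans ler01 hp)); apply/min_idPl.
Qed.

End UnifCdf.

Lemma down_measure0 F : down_measure F set0 = 0.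
Proof. by rewrite /down_measure image_set0 sup0. Qed.

Lemma le_down_measure F D t : inM F -> D t -> F t <= down_measure F D.
Proof.
move=> hF Dt; apply: (ub_le_sup _); last by exists t.
by exists 1 => _ [s _ <-]; case/andP: (inM_in01 s hF).
Qed.

Lemma down_measure_ge0 F D : inM F -> 0 <= down_measure F D.
Proof.
move=> hF; have [->|/set0P[t Dt]] := eqVneq D set0; first by rewrite down_measure0.
by apply: le_trans (le_down_measure hF Dt); case/andP: (inM_in01 t hF).
Qed.

Lemma down_measure_le F D c : 0 <= c -> (forall t, D t -> F t <= c) ->
  down_measure F D <= c.
Proof.
move=> c0 Fc; have [->|/set0P[t Dt]] := eqVneq D set0; first by rewrite down_measure0.
by apply: ge_sup; [exists (F t), t | move=> _ [s /Fc ? <-]].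
Qed.

Lemma down_measureT F : inM F -> down_measure F setT = 1.
Proof.
move=> hF; have [_ [_ [a [b [_ Fb]]]]] := hF.
apply/le_anti; rewrite down_measure_le ?ler01 //=; last by move=> t _; case/andP: (inM_in01 t hF).
by rewrite -(Fb b (lexx b)) le_down_measure.
Qed.

Lemma down_measure_le_set F s : inM F -> down_measure F [set t | t <= s] = F s.
Proof.
move=> hF; apply/le_anti; rewrite le_down_measure //= andbT.
by apply: down_measure_le => [|t /= ts]; [case/andP: (inM_in01 s hF) | exact: inM_homo].
Qed.

Lemma le_down_measure_subset F D E : inM F -> D `<=` E ->
  down_measure F D <= down_measure F E.
Proof.
move=> hF DE; apply: down_measure_le => [|t /DE]; first exact: down_measure_ge0.
exact: le_down_measure.
Qed.

Lemma Tu_homo u F : inM F -> {homo Tu u F : x y / x <= y}.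
Proof.
by move=> hF x y xy; apply: le_down_measure_subset => // t /= /le_trans; apply.
Qed.

Lemma Tu_in01 u F x : inM F -> 0 <= Tu u F x <= 1.
Proof.
move=> hF; rewrite down_measure_ge0 //=.
by apply: down_measure_le => [|t _]; [exact: ler01 | case/andP: (inM_in01 t hF)].
Qed.

End Cdf.

Section ProbabilityDistortion.
Variable R : realType.
Implicit Types (F d : R -> R) (x q : R).

Lemma distortion_in01 d F x : distortion d -> (forall y, 0 <= F y <= 1) ->
  0 <= d (F x) <= 1.
Proof. by case=> d01 _ F01; apply/d01/F01. Qed.

Lemma distortion_comp_homo d F : distortion d -> {homo F : s t / s <= t} ->
  (forall y, 0 <= F y <= 1) -> {homo (fun y => d (F y)) : s t / s <= t}.
Proof.
case=> _ [d_homo _] F_homo F01 s t st.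
by have /andP[Fs0 _] := F01 s; have /andP[_ Ft1] := F01 t; apply/d_homo/Ft1/F_homo.
Qed.

Lemma Td_inf d F x : distortion d -> {homo F : s t / s <= t} ->
  (forall y, 0 <= F y <= 1) -> Td d F x = inf ((fun y => d (F y)) @` [set y | x < y]).
Proof.
move=> hd F_homo F01; apply/cvg_lim/nondecreasing_cvg_at_right => //.
  exact: distortion_comp_homo.
by exists 0 => _ [y _ <-]; case/andP: (distortion_in01 y hd F01).
Qed.

Lemma inM_Td d F : distortion d -> inM F -> inM (Td d F).
Proof.
move=> hd hF; have [_ [_ [d0 d1]]] := hd; have [F_homo [_ [a [b [Fa Fb]]]]] := hF.
have F01 y : 0 <= F y <= 1 by apply: inM_in01.
have dF_lb x : has_lbound ((fun y => d (F y)) @` [set y | x < y]).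
  by exists 0 => _ [y _ <-]; case/andP: (distortion_in01 y hd F01).
have -> : Td d F = fun x => inf ((fun y => d (F y)) @` [set y | x < y]).
  by apply/funext => x; apply: Td_inf.
split; first exact: inf_right_homo.
split; first by move=> x; apply: inf_right_cvg_at_right => //; exact: distortion_comp_homo.
exists a, b; split=> x xab; apply: inf_image_min.
- by move=> y _; case/andP: (distortion_in01 y hd F01).
- by exists ((x + a) / 2) => /=; [lra | rewrite Fa ?d0 //; lra].
- by move=> y /= xy; rewrite Fb ?d1 //; lra.
- by exists (x + 1) => /=; [lra | rewrite Fb ?d1 //; lra].
Qed.

Lemma Td_dirac_cdf d q : distortion d -> Td d (dirac_cdf q) = dirac_cdf q.
Proof.
case=> _ [_ [d0 d1]]; have [_ [rc _]] := inM_dirac_cdf q.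
apply/funext => x; rewrite /Td (_ : (fun y => _) = dirac_cdf q); first exact: cvg_lim (rc x).
by apply/funext => y; rewrite /dirac_cdf; case: (q <= y).
Qed.

End ProbabilityDistortion.

Section Quantile.
Variable R : realType.
Implicit Types (F G : R -> R) (x y p q : R) (P Q : pred R).

Definition proper_upset P :=
  [/\ forall s t, P s -> s <= t -> P t, P 1 & ~~ P 0].

Lemma proper_upset_ge p : 0 < p <= 1 -> proper_upset [pred v | p <= v].
Proof.
move=> /andP[p0 p1]; split=> [s t /= ps st|//|/=]; last by rewrite -ltNge.
exact: le_trans ps st.
Qed.

Lemma proper_upset_gt p : 0 <= p < 1 -> proper_upset [pred v | p < v].
Proof.
move=> /andP[p0 p1]; split=> [s t /= ps st|//|/=]; last by rewrite -leNgt.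
exact: lt_le_trans ps st.
Qed.

Definition quantile G P := inf [set t | P (G t)].

Definition lquantile G p := quantile G [pred v | p <= v].

Definition rquantile G p := quantile G [pred v | p < v].

Lemma quantile_le G P x : inM G -> proper_upset P ->
  (quantile G P <= x <-> forall y, x < y -> P (G y)).
Proof.
move=> hG [P_up P1 P0]; have [G_homo [_ [a [b [Ga Gb]]]]] := hG.
apply: inf_upclosed_le.
- by exists b; rewrite /= Gb.
- exists a => t /= Pt; rewrite leNgt; apply/negP => /Ga G0.
  by move: Pt; rewrite G0 (negbTE P0).
- by move=> s t /= Ps st; apply: P_up Ps (G_homo _ _ st).
Qed.

Lemma lquantile_le G p x : inM G -> 0 < p <= 1 -> (lquantile G p <= x <-> p <= G x).
Proof.
move=> hG hp; rewrite /lquantile (quantile_le _ hG (proper_upset_ge hp)) /=.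
split=> [pG|px y xy].
  have [_ [G_rc _]] := hG; apply: (cvgr_to_ge (G_rc x)).
  by near=> y; apply: pG; near: y; apply: nbhs_right_gt.
rewrite /= (le_trans px) //; exact: inM_homo hG _ _ (ltW xy).
Unshelve. all: by end_near.
Qed.

Lemma le_quantile G P Q : inM G -> proper_upset P -> proper_upset Q ->
  {subset P <= Q} -> quantile G Q <= quantile G P.
Proof.
move=> hG hP hQ PQ; apply/(quantile_le _ hG hQ) => y xy; apply: PQ.
by move: y xy; apply/(quantile_le _ hG hP).
Qed.

Lemma rquantile_gap G p c : inM G -> 0 <= p < 1 -> rquantile G p < c ->
  exists2 p', p < p' <= 1 & lquantile G p' <= c.
Proof.
move=> hG hp qc; have /andP[_ Gc1] := inM_in01 c hG.
have pGc : p < G c by apply: (proj1 (quantile_le _ hG (proper_upset_gt hp)) (lexx _)).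
have hp' : 0 < (p + G c) / 2 <= 1 by apply/andP; split; lra.
by exists ((p + G c) / 2); [apply/andP; split; lra | apply/(lquantile_le _ hG hp'); lra].
Qed.

Lemma lquantile_gap G p c : inM G -> 0 < p <= 1 -> c < lquantile G p ->
  exists2 p', 0 <= p' < p & c <= rquantile G p'.
Proof.
move=> hG hp cq; have /andP[Gc0 _] := inM_in01 c hG.
have Gcp : G c < p by rewrite ltNge; apply/negP => /(lquantile_le _ hG hp); lra.
have hp' : 0 <= (G c + p) / 2 < 1 by apply/andP; split; lra.
exists ((G c + p) / 2); first by apply/andP; split; lra.
rewrite leNgt; apply/negP => qc.
have /= := proj1 (quantile_le _ hG (proper_upset_gt hp')) (lexx _) c qc; lra.
Qed.

Definition step P v : R := (P v)%:R.

Lemma distortion_step P : proper_upset P -> distortion (step P).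
Proof.
case=> P_up P1 P0; rewrite /distortion /step P1 (negbTE P0); split.
  by move=> v _; rewrite ler0n lern1 leq_b1.
split=> // s t _ st _; rewrite ler_nat.
by case: (boolP (P s)) => // /P_up /(_ st) ->.
Qed.

Lemma Td_step G P : inM G -> proper_upset P ->
  Td (step P) G = dirac_cdf (quantile G P).
Proof.
move=> hG hP; have hd := distortion_step hP.
apply/funext => x; rewrite (Td_inf _ hd (inM_homo hG) (fun y => inM_in01 y hG)) /dirac_cdf /step.
have [qx|xq] := lerP (quantile G P) x.
  have PG := proj1 (quantile_le _ hG hP) qx.
  apply: inf_image_min => [y /= /PG -> //|].
  by exists (x + 1) => /=; [lra | rewrite PG //; lra].
apply: inf_image_min => [y _|]; first exact: ler0n.
have /existsNP [y /not_implyP [xy /negP nPy]] : ~ (forall y, x < y -> P (G y)).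
  by rewrite -(quantile_le _ hG hP); apply/negP; rewrite -ltNge.
by exists y => //; rewrite (negbTE nPy).
Qed.

Section UnifQuantile.
Variables (a h : R).
Hypothesis h_gt0 : 0 < h.

Lemma lquantile_unif_cdf p : 0 < p <= 1 -> lquantile (unif_cdf a h) p = a + p * h.
Proof.
move=> /andP[p0 p1]; rewrite /lquantile /quantile.
rewrite (_ : [set t | _] = `[a + p * h, +oo[%classic) ?inf_itv //.
by apply/seteqP; split=> t /=; rewrite in_itv /= andbT /unif_cdf
  le_min p1 le_max (leNgt p 0) p0 /= ler_pdivlMr //; lra.
Qed.

Lemma rquantile_unif_cdf p : 0 <= p < 1 -> rquantile (unif_cdf a h) p = a + p * h.
Proof.
move=> /andP[p0 p1]; rewrite /rquantile /quantile.
rewrite (_ : [set t | _] = `]a + p * h, +oo[%classic) ?inf_itv //.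
by apply/seteqP; split=> t /=; rewrite in_itv /= andbT /unif_cdf
  lt_min p1 lt_max (ltNge p 0) p0 /= ltr_pdivlMr //; lra.
Qed.

End UnifQuantile.

End Quantile.

Section CommutingTransform.
Variable R : realType.
Variable T : (R -> R) -> (R -> R).
Hypothesis T_inM : forall F, inM F -> inM (T F).
Hypothesis T_Td : forall d, distortion d -> forall F, inM F -> T (Td d F) = Td d (T F).

Definition utility_of x := lquantile (T (dirac_cdf x)) 1.

Lemma T_dirac_cdf x : T (dirac_cdf x) = dirac_cdf (utility_of x).
Proof.
have h1 : proper_upset [pred v : R | 1 <= v] by apply: proper_upset_ge; rewrite ltr01 lexx.
have hd := distortion_step h1.
rewrite -{1}(Td_dirac_cdf x hd) (T_Td hd (inM_dirac_cdf x)).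
exact: Td_step (T_inM (inM_dirac_cdf x)) h1.
Qed.

Lemma quantile_T F P : inM F -> proper_upset P ->
  quantile (T F) P = utility_of (quantile F P).
Proof.
move=> hF hP; have hd := distortion_step hP; apply: dirac_cdf_inj.
by rewrite -(Td_step (T_inM hF) hP) -T_Td // Td_step // T_dirac_cdf.
Qed.

Lemma lquantile_T F p : inM F -> 0 < p <= 1 ->
  lquantile (T F) p = utility_of (lquantile F p).
Proof. by move=> hF /proper_upset_ge; exact: quantile_T. Qed.

Lemma rquantile_T F p : inM F -> 0 <= p < 1 ->
  rquantile (T F) p = utility_of (rquantile F p).
Proof. by move=> hF /proper_upset_gt; exact: quantile_T. Qed.

Lemma utility_of_homo : {homo utility_of : x y / x <= y}.
Proof.
move=> x y; rewrite le_eqVlt => /predU1P[-> //|xy].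
have h_gt0 : 0 < y - x by rewrite subr_gt0.
have hF := inM_unif_cdf x h_gt0; set F := unif_cdf x (y - x) in hF *.
have h0 : 0 <= (0 : R) < 1 by apply/andP; split; lra.
have h1 : 0 < (1 : R) <= 1 by apply/andP; split; lra.
have -> : x = rquantile F 0 by rewrite rquantile_unif_cdf //; lra.
have -> : y = lquantile F 1 by rewrite lquantile_unif_cdf //; lra.
rewrite -rquantile_T // -lquantile_T //.
apply: le_quantile; [exact: T_inM | exact: proper_upset_ge | exact: proper_upset_gt |].
by move=> v; rewrite !inE; apply: lt_le_trans ltr01.
Qed.

Lemma utility_of_continuous : continuous utility_of.
Proof.
have h2 : (0 : R) < 2 by [].
have half_ge : 0 < (2^-1 : R) <= 1 by apply/andP; split; lra.
have half_gt : 0 <= (2^-1 : R) < 1 by apply/andP; split; lra.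
apply: nondecreasing_continuous => [|x e e0|x e e0]; first exact: utility_of_homo.
(* The quantiles of F at p are x - 1 + 2 p, so on [x - 1, x + 1] utility_of is the
   quantile function of T F, whose left and right versions agree: it cannot jump. *)
all: have hF := inM_unif_cdf (x - 1) h2; set F := unif_cdf (x - 1) 2 in hF *.
- have /(rquantile_gap (T_inM hF) half_gt) [p /andP[p12 p1]] :
      rquantile (T F) 2^-1 < utility_of x + e.
    by rewrite rquantile_T // rquantile_unif_cdf // (_ : _ + _ = x); lra.
  have hp : 0 < p <= 1 by apply/andP; split; lra.
  rewrite lquantile_T // lquantile_unif_cdf // => up.
  by exists (x - 1 + p * 2) => //; lra.
- have /(lquantile_gap (T_inM hF) half_ge) [p /andP[p0 p12]] :
      utility_of x - e < lquantile (T F) 2^-1.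
    by rewrite lquantile_T // lquantile_unif_cdf // (_ : _ + _ = x); lra.
  have hp : 0 <= p < 1 by apply/andP; split; lra.
  rewrite rquantile_T // rquantile_unif_cdf // => up.
  by exists (x - 1 + p * 2) => //; lra.
Qed.

Lemma T_Tu F : inM F -> T F = Tu utility_of F.
Proof.
move=> hF; have hG := T_inM hF; apply/funext => x; rewrite /Tu.
have /andP[TF0 TF1] := inM_in01 x hG.
have le_TF p : 0 < p <= 1 -> p <= T F x <-> utility_of (lquantile F p) <= x.
  by move=> hp; rewrite -lquantile_T // lquantile_le.
apply/le_anti/andP; split.
  have [TFx0|TFx_gt0] := lerP (T F x) 0; first exact: le_trans TFx0 (down_measure_ge0 _ hF).
  have hp : 0 < T F x <= 1 by rewrite TFx_gt0.
  apply: le_trans (le_down_measure hF (proj1 (le_TF _ hp) (lexx _))).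
  exact/(lquantile_le _ hF hp).
apply: down_measure_le => // t /= ut.
have [Ft0|Ft_gt0] := lerP (F t) 0; first exact: le_trans Ft0 TF0.
have hp : 0 < F t <= 1 by rewrite Ft_gt0; case/andP: (inM_in01 t hF).
apply/le_TF => //; apply: le_trans ut; apply: utility_of_homo.
exact/(lquantile_le _ hF hp).
Qed.

End CommutingTransform.

Section UtilityTransform.
Variable R : realType.
Variable u : R -> R.
Hypothesis hu : utility u.

Lemma utility_sublevel x : [\/ forall t, x < u t, forall t, u t <= x |
  exists s, forall t, u t <= x <-> t <= s].
Proof.
have [u_homo u_cont] := hu; set S := [set t | u t <= x].
have [[t1 St1]|/forallNP S0] := pselect (exists t, u t <= x); last first.
  by constructor 1 => t; rewrite ltNge; apply/negP/S0.
have [[t2 xt2]|/forallNP ST] := pselect (exists t, x < u t); last first.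
  by constructor 2 => t; rewrite leNgt; apply/negP/ST.
have S_ub : ubound S t2.
  by move=> t; rewrite /S /= => ut; rewrite leNgt; apply/negP => /ltW/u_homo h; lra.
have S_closed : closed S := preimage_closed (fun t _ => u_cont t) (closed_le (y := x)).
have S_sup : S (sup S).
  have S_ne0 : S !=set0 by exists t1.
  have S_bounded : has_ubound S by exists t2.
  by have := closure_sup S_ne0 S_bounded; rewrite -(proj1 (closure_id S) S_closed).
constructor 3; exists (sup S) => t; split=> [St|ts].
  by apply: ub_le_sup St; exists t2.
exact: le_trans (u_homo _ _ ts) S_sup.
Qed.

Section Commutation.
Variables d F : R -> R.
Hypotheses (hd : distortion d) (hF : inM F).

Lemma Td_Tu_inf x :
  Td d (Tu u F) x = inf ((fun z => d (Tu u F z)) @` [set z | x < z]).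
Proof. exact: Td_inf hd (Tu_homo u hF) (fun y => Tu_in01 u y hF). Qed.

Lemma Tu_Td_sublevel0 x : (forall t, x < u t) -> Tu u (Td d F) x = Td d (Tu u F) x.
Proof.
move=> xu; have [_ [_ [a [_ [Fa _]]]]] := hF; have [_ [_ [d0 _]]] := hd.
have [u_homo _] := hu; have xa := xu (a - 1).
rewrite {1}/Tu (_ : [set t | u t <= x] = set0) ?down_measure0; last first.
  by apply/seteqP; split=> t //=; rewrite leNgt xu.
rewrite Td_Tu_inf; apply/esym; apply: inf_image_min => [z _|].
  by case/andP: (distortion_in01 z hd (fun y => Tu_in01 u y hF)).
exists ((x + u (a - 1)) / 2) => /=; first lra.
suff -> : Tu u F ((x + u (a - 1)) / 2) = 0 by [].
have /andP[K0 _] := Tu_in01 u ((x + u (a - 1)) / 2) hF.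
apply/le_anti; rewrite K0 andbT; apply: down_measure_le => // t /= ut.
rewrite Fa //; have : u t < u (a - 1) by lra.
by move=> /(contra_lt (u_homo _ _)); lra.
Qed.

Lemma Tu_Td_sublevelT x : (forall t, u t <= x) -> Tu u (Td d F) x = Td d (Tu u F) x.
Proof.
move=> ux; have [_ [_ [_ d1]]] := hd.
have sublevelT z : x <= z -> [set t | u t <= z] = setT.
  by move=> xz; apply/seteqP; split=> t //= _; apply: le_trans (ux t) xz.
have Tu1 z : x <= z -> Tu u F z = 1 by move=> xz; rewrite /Tu sublevelT ?down_measureT.
rewrite {1}/Tu sublevelT // down_measureT ?Td_Tu_inf; last exact: inM_Td.
apply/esym; apply: inf_image_min => [z /= xz|]; first by rewrite Tu1 ?d1 //; exact: ltW.
by exists (x + 1) => /=; [lra | rewrite Tu1 ?d1 //; lra].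
Qed.

Lemma Tu_Td_sublevel_le x s : (forall t, u t <= x <-> t <= s) ->
  Tu u (Td d F) x = Td d (Tu u F) x.
Proof.
move=> uxs; have [u_homo u_cont] := hu; have [_ [d_homo _]] := hd.
have F01 y : 0 <= F y <= 1 by apply: inM_in01.
have K01 z : 0 <= Tu u F z <= 1 by apply: Tu_in01.
have d_FK y z : F y <= Tu u F z -> d (F y) <= d (Tu u F z).
  by move=> FK; have /andP[F0 _] := F01 y; have /andP[_ K1] := K01 z; apply: d_homo F0 FK K1.
have d_KF z y : Tu u F z <= F y -> d (Tu u F z) <= d (F y).
  by move=> KF; have /andP[_ F1] := F01 y; have /andP[K0 _] := K01 z; apply: d_homo K0 KF F1.
rewrite {1}/Tu (_ : [set t | u t <= x] = [set t | t <= s]); last first.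
  by apply/seteqP; split=> t /uxs.
rewrite down_measure_le_set; last exact: inM_Td.
rewrite Td_Tu_inf (Td_inf _ hd (inM_homo hF) F01).
have us : u s <= x by apply/uxs.
apply/le_anti/andP; split; apply: inf_image_le.
- by exists 0 => _ [y _ <-]; case/andP: (distortion_in01 y hd F01).
- by exists (x + 1) => /=; lra.
- move=> z /= xz; have [y sy uy] := continuous_right_lt (u_cont s) (le_lt_trans us xz).
  by exists y => //; apply/d_FK/le_down_measure => //=; exact: ltW.
- by exists 0 => _ [z _ <-]; case/andP: (distortion_in01 z hd K01).
- by exists (s + 1) => /=; lra.
- move=> y /= sy; have xuy : x < u y by rewrite ltNge; apply/negP => /uxs; lra.
  exists ((x + u y) / 2) => /=; first lra.
  apply/d_KF/down_measure_le => [|t /= ut]; first by case/andP: (F01 y).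
  have : u t < u y by lra.
  by move=> /(contra_lt (u_homo _ _)) /ltW; apply: inM_homo.
Qed.

End Commutation.

Lemma Tu_Td d F : distortion d -> inM F -> Tu u (Td d F) = Td d (Tu u F).
Proof.
move=> hd hF; apply/funext => x.
by case: (utility_sublevel x) => [xu|ux|[s uxs]];
  [exact: Tu_Td_sublevel0 | exact: Tu_Td_sublevelT | exact: Tu_Td_sublevel_le uxs].
Qed.

End UtilityTransform.

Theorem theorem2 (R : realType) (T : (R -> R) -> (R -> R))
  (HT : forall F, inM F -> inM (T F)) :
  (forall d, distortion d -> forall F, inM F -> T (Td d F) = Td d (T F)) <->
  (exists u, utility u /\ forall F, inM F -> T F = Tu u F).
Proof.
split=> [T_Td | [u [hu T_eq]] d hd F hF].
  exists (utility_of T); split; last exact: T_Tu.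
  by split; [exact: utility_of_homo | exact: utility_of_continuous].
by rewrite (T_eq _ (inM_Td hd hF)) (T_eq _ hF) (Tu_Td hu hd hF).
Qed.
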